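(* Let $\mathcal{A}=(A,\le,\wedge,1,\to)$ be a strong algebra whose monoidal structure is its meet structure and which internalizes its monoidal structure, i.e. $a\to(b\wedge c)=(a\to b)\wedge(a\to c)$ for all $a,b,c$. Then there exist a Kripke frame $\mathcal{K}=(W,\le_W,R)$ and a map $i:A\to U(W,\le_W)$ which preserves finite meets, is an order embedding, and satisfies $i(a\to b)=i(a)\to_{\mathcal{K}}i(b)$. Moreover, if $(A,\le)$ has all finite joins, is distributive, and $\to$ internalizes joins ($(a\vee b)\to c=(a\to c)\wedge(b\to c)$), then $i$ can be chosen to preserve finite joins as well. Finally, if $\mathcal{A}$ is the reduct of a temporal algebra, i.e. there is $\nabla:A\to A$ with $a\wedge\nabla b\le c$ iff $b\le a\to c$, then $i$ also satisfies $i(\nabla a)=\nabla_{\mathcal{K}}i(a)$, and for any $\mathcal{R}\subseteq\{N,H,P,F,wF\}$, if $(A,\le,\wedge,1,\nabla,\to)$ satisfies $\mathcal{R}$ then so does $\mathcal{K}$.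
   Context: An implication on a meet-semilattice with top $(A,\le,\wedge,1)$ is a map $\to:A^{op}\times A\to A$, antitone in the first and monotone in the second argument, with $1\le a\to a$ and $(a\to b)\wedge(b\to c)\le a\to c$; a strong algebra is such a structure. Distributive means binary meet distributes over finite joins. A Kripke frame is $(W,\le_W,R)$ with $(W,\le_W)$ a poset and $R\subseteq W\times W$ such that $(u,v)\in R$, $u'\le_W u$, $v\le_W v'$ imply $(u',v')\in R$. $U(W,\le_W)$ is the set of upsets of $(W,\le_W)$ ordered by inclusion, with meet $\cap$ and top $W$. For an upset $X$, $\nabla_{\mathcal{K}}X=\{v\in W\mid\exists u\in X\,(u,v)\in R\}$, and $X\to_{\mathcal{K}}Y=\{w\in W\mid\forall v\,((w,v)\in R\wedge v\in X\Rightarrow v\in Y)\}$, so that $X\cap\nabla_{\mathcal{K}}Y\subseteq Z$ iff $Y\subseteq X\to_{\mathcal{K}}Z$. The algebra satisfies: $(N)$ if $\nabla1=1$ and $\nabla(a\wedge b)=\nabla a\wedge\nabla b$; $(H)$ if $\nabla$ preserves all the structure, including $\nabla(a\to b)=\nabla a\to\nabla b$; $(P)$ if $\nabla a\le a$; $(F)$ if $a\le\nabla a$; $(wF)$ if $A$ has a least element $0$ and $\nabla a=0$ implies $a=0$. The frame satisfies: $(N)$ if there is an order-preserving $\pi:W\to W$ with $(u,v)\in R$ iff $u\le_W\pi(v)$; $(H)$ if moreover such $\pi$ is an order isomorphism; $(P)$ if $R\subseteq\le_W$; $(F)$ if $R$ is reflexive; $(wF)$ if $R$ is serial ($\forall u\,\exists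 v\,(u,v)\in R$). *)

From HB Require Import structures.
From mathcomp Require Import all_boot all_order.
Set Implicit Arguments. Unset Strict Implicit. Unset Printing Implicit Defensive.
Import Order.TTheory.
Local Open Scope order_scope.

Section Alg.
Context {d : Order.disp_t} {A : tMeetSemilatticeType d}.

Definition is_implication (imp : A -> A -> A) : Prop :=
  [/\ (forall a a' b, a' <= a -> imp a b <= imp a' b),
      (forall a b b', b <= b' -> imp a b <= imp a b'),
      (forall a, \top <= imp a a) &
      (forall a b c, imp a b `&` imp b c <= imp a c)].

Definition internalizes_meets (imp : A -> A -> A) : Prop :=
  forall a b c, imp a (b `&` c) = imp a b `&` imp a c.

Definition is_finite_joins (join : A -> A -> A) (bot : A) : Prop :=
  [/\ (forall a b, a <= join a b), (forall a b, b <= join a b),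
      (forall a b c, a <= c -> b <= c -> join a b <= c) &
      (forall a, bot <= a)].

Definition distributive (join : A -> A -> A) (bot : A) : Prop :=
  (forall a b c, a `&` join b c = join (a `&` b) (a `&` c)) /\
  (forall a, a `&` bot = bot).

Definition internalizes_joins (imp : A -> A -> A) (join : A -> A -> A) (bot : A)
  : Prop :=
  (forall a b c, imp (join a b) c = imp a c `&` imp b c) /\
  (forall c, imp bot c = \top).

Definition temporal (imp : A -> A -> A) (nabla : A -> A) : Prop :=
  forall a b c, (a `&` nabla b <= c) <-> (b <= imp a c).

End Alg.

Inductive cond := cN | cH | cP | cF | cwF.

Definition alg_sat {d} {A : tMeetSemilatticeType d} (imp : A -> A -> A)
  (nabla : A -> A) (c : cond) : Prop :=
  match c with
  | cN => nabla \top = \top /\ (forall a b, nabla (a `&` b) = nabla a `&` nabla b)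
  | cH => [/\ nabla \top = \top,
              (forall a b, nabla (a `&` b) = nabla a `&` nabla b) &
              (forall a b, nabla (imp a b) = imp (nabla a) (nabla b))]
  | cP => forall a, nabla a <= a
  | cF => forall a, a <= nabla a
  | cwF => exists z : A, (forall a, z <= a) /\ (forall a, nabla a = z -> a = z)
  end.

Definition kripke_frame (W : Type) (leW R : W -> W -> Prop) : Prop :=
  [/\ (forall u, leW u u),
      (forall u v w, leW u v -> leW v w -> leW u w),
      (forall u v, leW u v -> leW v u -> u = v) &
      (forall u v u' v', R u v -> leW u' u -> leW v v' -> R u' v')].

Definition is_upset (W : Type) (leW : W -> W -> Prop) (X : W -> Prop) : Prop :=
  forall u v, X u -> leW u v -> X v.

Definition nablaK (W : Type) (R : W -> W -> Prop) (X : W -> Prop) : W -> Prop :=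
  fun v => exists u, X u /\ R u v.

Definition impK (W : Type) (R : W -> W -> Prop) (X Y : W -> Prop) : W -> Prop :=
  fun w => forall v, R w v -> X v -> Y v.

Definition frame_sat (W : Type) (leW R : W -> W -> Prop) (c : cond) : Prop :=
  match c with
  | cN => exists pi : W -> W, (forall u v, leW u v -> leW (pi u) (pi v)) /\
            (forall u v, R u v <-> leW u (pi v))
  | cH => exists pi : W -> W,
            [/\ (forall u v, leW u v <-> leW (pi u) (pi v)),
                (forall v, exists u, pi u = v) &
                (forall u v, R u v <-> leW u (pi v))]
  | cP => forall u v, R u v -> leW u v
  | cF => forall u, R u u
  | cwF => forall u, exists v, R u v
  end.

From HB Require Import structures.
From mathcomp Require Import all_boot all_order.
From mathcomp Require classical_sets.
From Stdlib Require Import Classical FunctionalExtensionality PropExtensionality ProofIrrelevance.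
Import Order.TTheory.
Local Open Scope order_scope.

(* Worlds are the filters of A that are prime for every admissible join
   structure (joins are unique, and when there are none every filter is a
   world); [R p q] says that [q] is closed under modus ponens with the
   implications in [p], and [i a] is the set of worlds containing [a]. Every
   separation property is an instance of one prime filter theorem, proved by
   Zorn's lemma for ideals closed backwards along a meet- and join-compatible
   preorder [T] extending <=: [T := <=] separates [a] from [b], and
   [T x y := p (x -> y)] yields an [R]-successor of [p] refuting [a -> b].
   When nabla exists, [R p q] says that [q] contains the nabla-image of [p],
   so each condition on nabla turns into the matching condition on [R]. *)

Definition is_filter {d} {A : tMeetSemilatticeType d} (F : A -> Prop) :=
  [/\ F \top, (forall x y, F x -> F y -> F (x `&` y)) &
      (forall x y, x <= y -> F x -> F y)].

Section Joins.
Context {d : Order.disp_t} {A : tMeetSemilatticeType d}.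
Variables (join : A -> A -> A) (bot : A).
Hypothesis joinsA : is_finite_joins join bot.

Lemma le_join_l a b : a <= join a b. Proof. by case: joinsA. Qed.
Lemma le_join_r a b : b <= join a b. Proof. by case: joinsA. Qed.
Lemma join_le a b c : a <= c -> b <= c -> join a b <= c.
Proof. by case: joinsA => _ _ H _; apply: H. Qed.
Lemma bot_le a : bot <= a. Proof. by case: joinsA. Qed.

Lemma join_mono a b a' b' : a <= a' -> b <= b' -> join a b <= join a' b'.
Proof.
move=> aa' bb'; apply: join_le.
  exact: le_trans aa' (le_join_l _ _).
exact: le_trans bb' (le_join_r _ _).
Qed.

Lemma meet_join_le (distrA : distributive join bot) m x y :
  join m x `&` join m y <= join m (x `&` y).
Proof.
case: distrA => distr _; rewrite distr; apply: join_le.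
  exact: le_trans (leIr _ _) (le_join_l _ _).
rewrite meetC distr; apply: join_le; first exact: le_trans (leIr _ _) (le_join_l _ _).
by rewrite meetC; apply: le_join_r.
Qed.

Lemma order_iso_preserves_joins (f g : A -> A) :
  {homo f : x y / x <= y} -> {homo g : x y / x <= y} ->
  cancel f g -> cancel g f ->
  f bot <= bot /\ (forall x y, f (join x y) <= join (f x) (f y)).
Proof.
move=> fmono gmono fK gK; split.
  by rewrite -{2}(gK bot); apply: fmono; apply: bot_le.
move=> x y; rewrite -[leRHS]gK; apply: fmono.
by apply: join_le; rewrite -[leLHS]fK; apply: gmono;
  [apply: le_join_l | apply: le_join_r].
Qed.

End Joins.

Arguments le_join_l {d A join bot} joinsA a b.
Arguments le_join_r {d A join bot} joinsA a b.
Arguments join_le {d A join bot} joinsA a b c.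
Arguments bot_le {d A join bot} joinsA a.
Arguments join_mono {d A join bot} joinsA a b a' b'.
Arguments meet_join_le {d A join bot} joinsA distrA m x y.
Arguments order_iso_preserves_joins {d A join bot} joinsA f g.

Lemma joins_unique {d} {A : tMeetSemilatticeType d} {join join' : A -> A -> A} {bot bot' : A} :
  is_finite_joins join bot -> is_finite_joins join' bot' ->
  (forall x y, join x y = join' x y) /\ bot = bot'.
Proof.
move=> joins joins'; split; last by apply: le_anti; rewrite (bot_le joins) (bot_le joins').
move=> x y; apply: le_anti.
by rewrite (join_le joins) ?(join_le joins') ?(le_join_l joins') ?(le_join_r joins')
  ?(le_join_l joins) ?(le_join_r joins).
Qed.

Section PrimeFilterTheorem.
Context {d : Order.disp_t} {A : tMeetSemilatticeType d}.
Variables (join : A -> A -> A) (bot : A).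
Hypothesis joinsA : is_finite_joins join bot.
Hypothesis distrA : distributive join bot.

Variable T : A -> A -> Prop.
Hypothesis T_le : forall {x y}, x <= y -> T x y.
Hypothesis T_trans : forall {x y z}, T x y -> T y z -> T x z.
Hypothesis T_meet : forall {x y y'}, T x y -> T x y' -> T x (y `&` y').
Hypothesis T_join : forall {x x' y}, T x y -> T x' y -> T (join x x') y.

Variables (J : A -> Prop) (a : A).
Hypothesis J_T : forall {x y}, T x y -> J y -> J x.
Hypothesis J_join : forall {x y}, J x -> J y -> J (join x y).
Hypothesis J_bot : J bot.
Hypothesis J_a : ~ J a.

Definition separating_ideal (M : A -> Prop) :=
  [/\ forall x y, M x -> M y -> M (join x y),
      forall x y, T x y -> M y -> M x & ~ M a].

Lemma chain_union_separating (F : classical_sets.set (classical_sets.set A)) :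
  (forall X, F X -> separating_ideal (fun x => X x \/ J x)) ->
  classical_sets.total_on F classical_sets.subset ->
  separating_ideal (fun x => classical_sets.bigcup F id x \/ J x).
Proof.
move=> sepF chainF.
have common x y : classical_sets.bigcup F id x \/ J x ->
    classical_sets.bigcup F id y \/ J y ->
    (J x /\ J y) \/ exists2 X, F X & (X x \/ J x) /\ (X y \/ J y).
  case=> [[X FX Xx]|Jx] [[Y FY Yy]|Jy].
  - case: (chainF X Y FX FY) => [XY|YX]; right.
      by exists Y => //; split; left => //; apply: XY.
    by exists X => //; split; left => //; apply: YX.
  - by right; exists X => //; split; [left | right].
  - by right; exists Y => //; split; [right | left].
  - by left.
split.
- move=> x y Ux Uy; case: (common x y Ux Uy) => [[Jx Jy]|[X FX [Xx Xy]]].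
    by right; apply: J_join.
  have [joinX _ _] := sepF X FX.
  by case: (joinX x y Xx Xy) => [?|?]; [left; exists X | right].
- move=> x y Txy [[X FX Xy]|Jy]; last by right; apply: J_T Jy.
  have [_ TX _] := sepF X FX.
  by case: (TX x y Txy (or_introl Xy)) => [?|?]; [left; exists X | right].
- case=> [[X FX Xa]|//]; have [_ _ nXa] := sepF X FX.
  by apply: nXa; left.
Qed.

(* Zorn is applied to the [X] with [X \/ J] separating, so that the empty
   chain is allowed. *)
Lemma maximal_separating_ideal : exists M, [/\ separating_ideal M,
  (forall x, J x -> M x) &
  forall N, separating_ideal N -> (forall x, M x -> N x) -> forall x, N x -> M x].
Proof.
have [X [sepX maxX]] :=
  classical_sets.Zorn_bigcup (P := fun X => separating_ideal (fun x => X x \/ J x))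
    chain_union_separating.
exists (fun x => X x \/ J x); split => //; first by move=> x Jx; right.
move=> N sepN MN x Nx; left; apply: NNPP => nXx; apply: (maxX N).
  split; first by move=> y Xy; apply: MN; left.
  by move=> NX; apply: nXx; apply: NX.
have -> : (fun y => N y \/ J y) = N => //.
apply: functional_extensionality => y; apply: propositional_extensionality.
by split=> [[//|Jy]|]; [apply: MN; right | left].
Qed.

Section MaximalIdeal.
Variable M : A -> Prop.
Hypothesis sepM : separating_ideal M.
Hypothesis J_M : forall x, J x -> M x.
Hypothesis maxM :
  forall N, separating_ideal N -> (forall x, M x -> N x) -> forall x, N x -> M x.

Let M_join : forall {x y}, M x -> M y -> M (join x y). Proof. by case: sepM. Qed.
Let M_T : forall {x y}, T x y -> M y -> M x. Proof. by case: sepM. Qed.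
Let M_a : ~ M a. Proof. by case: sepM. Qed.

Lemma maximal_ideal_witness {x} : ~ M x -> exists2 m, M m & T a (join m x).
Proof.
move=> nMx; apply: NNPP => noWitness.
pose N z := exists2 m, M m & T z (join m x).
have sepN : separating_ideal N.
  split=> [u v [m1 M1 T1] [m2 M2 T2]|u v Tuv [m Mm Tm]|//].
    exists (join m1 m2); first exact: M_join.
    by apply: T_join; [apply: T_trans T1 _ | apply: T_trans T2 _]; apply: T_le;
      apply: (join_mono joinsA); rewrite ?(le_join_l joinsA) ?(le_join_r joinsA).
  by exists m => //; apply: T_trans Tm.
have MN z : M z -> N z by exists z => //; apply: T_le; apply: (le_join_l joinsA).
apply: nMx; apply: (maxM _ sepN MN).
by exists bot; [apply: J_M | apply: T_le; apply: (le_join_r joinsA)].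
Qed.

(* Meet-closure of the complement is where distributivity is used. *)
Lemma maximal_ideal_compl_filter : is_filter (fun x => ~ M x).
Proof.
split=> [Mtop|x y nMx nMy Mxy|x y xy nMx My].
- by apply: M_a; apply: M_T Mtop; apply: T_le; apply: lex1.
- have [m1 M1 T1] := maximal_ideal_witness nMx.
  have [m2 M2 T2] := maximal_ideal_witness nMy.
  apply: M_a; apply: (@M_T _ (join (join m1 m2) (x `&` y))); last first.
    by apply: M_join => //; apply: M_join.
  apply: T_trans _ (T_le (meet_join_le joinsA distrA _ _ _)).
  by apply: T_meet; [apply: T_trans T1 _ | apply: T_trans T2 _]; apply: T_le;
    apply: (join_mono joinsA); rewrite ?(le_join_l joinsA) ?(le_join_r joinsA).
- by apply: nMx; apply: M_T My; apply: T_le.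
Qed.

End MaximalIdeal.

Theorem prime_filter_separation : exists Q : A -> Prop,
  [/\ is_filter Q, ~ Q bot /\ (forall x y, Q (join x y) -> Q x \/ Q y),
      Q a, (forall x, J x -> ~ Q x) & (forall x y, T x y -> Q x -> Q y)].
Proof.
have [M [sepM J_M maxM]] := maximal_separating_ideal.
have [M_join M_T M_a] := sepM.
exists (fun x => ~ M x); split=> //.
- exact: maximal_ideal_compl_filter.
- split=> [|x y nMxy]; first by apply; apply: J_M.
  by apply: NNPP => nxy; apply: nMxy; apply: M_join; apply: NNPP => ?; tauto.
- by move=> x Jx; apply; apply: J_M.
- by move=> x y Txy nMx My; apply: nMx; apply: M_T My.
Qed.

End PrimeFilterTheorem.

Arguments prime_filter_separation {d A join bot} joinsA distrA {T} T_le T_trans T_meet T_join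
  {J a} J_T J_join J_bot J_a.

Section CanonicalFrame.
Context {d : Order.disp_t} {A : tMeetSemilatticeType d} (imp : A -> A -> A).
Hypothesis impA : is_implication imp.
Hypothesis imp_meet : internalizes_meets imp.

Lemma imp_mono a b b' : b <= b' -> imp a b <= imp a b'.
Proof. by case: impA => _ H _ _; apply: H. Qed.
Lemma imp_refl a : \top <= imp a a.
Proof. by case: impA. Qed.
Lemma imp_trans a b c : imp a b `&` imp b c <= imp a c.
Proof. by case: impA. Qed.
Lemma top_le_imp a b : a <= b -> \top <= imp a b.
Proof. by move=> ab; apply: le_trans (imp_refl a) _; apply: imp_mono. Qed.

Definition admissible_joins (join : A -> A -> A) (bot : A) :=
  [/\ is_finite_joins join bot, distributive join bot &
      internalizes_joins imp join bot].

Definition join_prime (F : A -> Prop) := forall join bot,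
  admissible_joins join bot -> ~ F bot /\ (forall x y, F (join x y) -> F x \/ F y).

Record point := Point {
  point_set :> A -> Prop;
  point_filter : is_filter point_set;
  point_prime : join_prime point_set }.

Arguments Point {point_set} point_filter point_prime.

Lemma point_top (p : point) : p \top.
Proof. by case: (point_filter p). Qed.
Lemma point_meet {p : point} {x y} : p x -> p y -> p (x `&` y).
Proof. by case: (point_filter p) => _ H _; apply: H. Qed.
Lemma point_up {p : point} {x y} : p x -> x <= y -> p y.
Proof. by case: (point_filter p) => _ _ H px xy; apply: H xy px. Qed.

Lemma point_meetE (p : point) x y : p (x `&` y) <-> p x /\ p y.
Proof.
split=> [pxy|[px py]]; last exact: point_meet.
by split; apply: point_up pxy _; [apply: leIl | apply: leIr].
Qed.

Lemma point_eq (p q : point) : (forall x, p x <-> q x) -> p = q.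
Proof.
case: p q => [P Pf Pp] [Q Qf Qp] /= PQ.
have E : P = Q.
  by apply: functional_extensionality => x; apply: propositional_extensionality.
by subst Q; f_equal; apply: proof_irrelevance.
Qed.

Lemma join_prime_of {F : A -> Prop} {join bot} : is_finite_joins join bot ->
  ~ F bot -> (forall x y, F (join x y) -> F x \/ F y) -> join_prime F.
Proof.
move=> joins Fbot Fjoin join' bot' [joins' _ _].
have [joinE <-] := joins_unique joins joins'.
by split=> // x y; rewrite -joinE; apply: Fjoin.
Qed.

(* Without admissible joins, the set of [T]-successors of [a] already works. *)
Lemma separating_point (T : A -> A -> Prop) (J : A -> Prop) (a : A) :
  (forall x y, x <= y -> T x y) -> (forall x y z, T x y -> T y z -> T x z) ->
  (forall x y y', T x y -> T x y' -> T x (y `&` y')) ->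
  (forall x y, T x y -> J y -> J x) ->
  (forall join bot, admissible_joins join bot ->
     [/\ forall x x' y, T x y -> T x' y -> T (join x x') y,
         forall x y, J x -> J y -> J (join x y) & J bot]) ->
  ~ J a ->
  exists p : point, [/\ p a, forall x, J x -> ~ p x & forall x y, T x y -> p x -> p y].
Proof.
move=> T_le T_trans T_meet J_T J_joins J_a.
case: (classic (exists join bot, admissible_joins join bot)) => [|no_joins].
  move=> [join [bot adm]]; have [T_join J_join J_bot] := J_joins _ _ adm.
  case: adm => joins distr _.
  have [Q [Qf [Qbot Qjoin] Qa QJ QT]] := prime_filter_separation joins distr
    T_le T_trans T_meet T_join J_T J_join J_bot J_a.
  by exists (Point Qf (join_prime_of joins Qbot Qjoin)).
have Tf : is_filter (T a).
  split=> [|x y|x y xy Tax]; first exact/T_le/lex1.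
    exact: T_meet.
  exact: T_trans Tax (T_le _ _ xy).
have Tp : join_prime (T a) by move=> join bot adm; case: no_joins; exists join, bot.
exists (Point Tf Tp); split=> /= [|x Jx Tax|x y Txy Tax]; first exact: T_le.
  exact/J_a/(J_T _ _ Tax).
exact: T_trans Tax Txy.
Qed.

Definition access (p q : point) := forall x y, p (imp x y) -> q x -> q y.

(* The second clause makes [access] monotone in its target. *)
Definition point_le (p q : point) :=
  (forall x, p x -> q x) /\ (forall r, access r p -> access r q).

Definition ival (a : A) (p : point) := p a.

Lemma canonical_kripke_frame : kripke_frame point_le access.
Proof.
split.
- by move=> p; split.
- move=> p q r [pq pq'] [qr qr']; split=> [x /pq/qr //|s /pq'/qr' //].
- by move=> p q [pq _] [qp _]; apply: point_eq => x; split; [apply: pq | apply: qp].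
- move=> p q p' q' pq [p'p _] [_ qq']; apply: qq' => x y /p'p; exact: pq.
Qed.

Lemma ival_le a b : a <= b <-> forall p : point, ival a p -> ival b p.
Proof.
split=> [ab p pa|ab_points]; first exact: point_up pa ab.
apply: NNPP => nab.
have [||||||p [pa pJ _]] := separating_point <=%O (fun x => x <= b) a.
- by [].
- by move=> x y z; apply: le_trans.
- by move=> x y y' xy xy'; rewrite lexI xy xy'.
- by move=> x y; apply: le_trans.
- move=> join bot [joins _ _]; split=> [x x' y||].
  + exact: join_le joins x x' y.
  + by move=> x y xb yb; apply: join_le joins x y b xb yb.
  + exact: bot_le joins b.
- exact: nab.
by apply: (pJ b) => //; apply: ab_points.
Qed.

Lemma access_witness {p : point} {a b} : ~ p (imp a b) ->
  exists q : point, [/\ access p q, q a & ~ q b].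
Proof.
move=> nab.
have [||||||q [qa qJ qT]] :=
  separating_point (fun x y => p (imp x y)) (fun x => p (imp x b)) a.
- by move=> x y xy /=; apply: point_up (point_top p) _; apply: top_le_imp.
- by move=> x y z /= pxy pyz; apply: point_up (point_meet pxy pyz) _; apply: imp_trans.
- by move=> x y y' /= pxy pxy'; rewrite imp_meet; apply: point_meet.
- by move=> x y /= pxy pyb; apply: point_up (point_meet pxy pyb) _; apply: imp_trans.
- move=> join bot [_ _ [imp_join imp_bot]].
  split=> [x x' y /= pxy px'y|x y /= pxb pyb|/=]; rewrite ?imp_join ?imp_bot.
  + exact: point_meet.
  + exact: point_meet.
  + exact: point_top.
- exact: nab.
exists q; split=> //; last by apply: qJ; apply: point_up (point_top p) _; apply: imp_refl.
Qed.

Lemma ival_imp a b (p : point) :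
  ival (imp a b) p <-> impK access (ival a) (ival b) p.
Proof.
split=> [pab q pq qa|pab]; first exact: pq pab qa.
apply: NNPP => nab; have [q [pq qa nqb]] := access_witness nab.
exact/nqb/(pab q pq qa).
Qed.

Lemma ival_join join bot : admissible_joins join bot ->
  (forall p, ~ ival bot p) /\ (forall a b p, ival (join a b) p <-> ival a p \/ ival b p).
Proof.
move=> adm; have [joins _ _] := adm; rewrite /ival.
split=> [p|a b p]; first by case: (point_prime p _ _ adm).
split; first by case: (point_prime p _ _ adm) => _; apply.
by case=> [pa|pb];
  [exact: point_up pa (le_join_l joins a b) | exact: point_up pb (le_join_r joins a b)].
Qed.

Section Preimage.
Variable f : A -> A.
Hypothesis f_top : f \top = \top.
Hypothesis f_meet : {morph f : x y / x `&` y}.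
Hypothesis f_joins : forall join bot, is_finite_joins join bot ->
  f bot <= bot /\ (forall x y, f (join x y) <= join (f x) (f y)).

Lemma preimage_filter (p : point) : is_filter (fun x => p (f x)).
Proof.
split=> [|x y px py|x y xy px] /=; first by rewrite f_top; apply: point_top.
  by rewrite f_meet; apply: point_meet.
by apply: point_up px _; rewrite -(meet_idPl xy) f_meet leIr.
Qed.

Lemma preimage_join_prime (p : point) : join_prime (fun x => p (f x)).
Proof.
move=> join bot adm; have [joins _ _] := adm.
have [pbot pjoin] := point_prime p _ _ adm; have [f_bot f_join] := f_joins _ _ joins.
split=> [/(point_up ^~ f_bot) //|x y /(point_up ^~ (f_join x y))]; exact: pjoin.
Qed.

Definition preimage_point (p : point) : point :=
  Point (preimage_filter p) (preimage_join_prime p).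

End Preimage.

Arguments preimage_point {f} f_top f_meet f_joins p.

Section Temporal.
Variable nabla : A -> A.
Hypothesis nablaA : temporal imp nabla.

Lemma nabla_le b c : nabla b <= c <-> b <= imp \top c.
Proof. by rewrite -nablaA meet1x. Qed.

Lemma le_imp_top_nabla b : b <= imp \top (nabla b). Proof. exact/nabla_le. Qed.
Lemma nabla_imp_top_le c : nabla (imp \top c) <= c. Proof. exact/nabla_le. Qed.

Lemma nabla_mono : {homo nabla : x y / x <= y}.
Proof. by move=> x y xy; apply/nabla_le; apply: le_trans xy (le_imp_top_nabla y). Qed.

Lemma nabla_preserves_joins join bot : is_finite_joins join bot ->
  nabla bot <= bot /\ (forall x y, nabla (join x y) <= join (nabla x) (nabla y)).
Proof.
move=> joins; split=> [|x y]; apply/nabla_le; first exact: bot_le joins _.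
apply: (join_le joins); apply: le_trans (le_imp_top_nabla _) _; apply: imp_mono.
  exact: le_join_l joins _ _.
exact: le_join_r joins _ _.
Qed.

Lemma accessE p q : access p q <-> forall c, p c -> q (nabla c).
Proof.
split=> [pq c pc|pq x y pxy qx].
  by apply: (pq \top) (point_top q); apply: point_up pc _; apply: le_imp_top_nabla.
by apply: point_up (point_meet qx (pq _ pxy)) _; apply/nablaA.
Qed.

Lemma point_leE p q : point_le p q <-> forall x, p x -> q x.
Proof.
split=> [[]//|pq]; split=> // r; rewrite !accessE => rp c rc; exact/pq/rp.
Qed.

Lemma ival_nabla a (w : point) : ival (nabla a) w <-> nablaK access (ival a) w.
Proof.
split=> [wa|[u [ua uw]]]; last by move/accessE: uw; apply.
have [||||||u [ua uJ _]] := separating_point <=%O (fun z => ~ w (nabla z)) a.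
- by [].
- by move=> x y z; apply: le_trans.
- by move=> x y y' xy xy'; rewrite lexI xy xy'.
- by move=> x y xy nwy wx; apply/nwy/(point_up wx)/nabla_mono.
- move=> join bot adm; have [joins _ _] := adm.
  have [wbot wjoin] := point_prime w _ _ adm.
  have [nabla_bot nabla_join] := nabla_preserves_joins _ _ joins.
  split=> [x x' y||].
  + by move=> xy x'y; apply: join_le joins x x' y xy x'y.
  + by move=> x y nwx nwy /(point_up ^~ (nabla_join x y)) /wjoin; tauto.
  + by move/(point_up ^~ nabla_bot).
- by [].
exists u; split=> //; apply/accessE => c uc; apply: NNPP => nwc; exact: uJ nwc uc.
Qed.

Lemma imp_top_nabla_inv : nabla \top = \top ->
  (forall a b, nabla (imp a b) = imp (nabla a) (nabla b)) ->
  cancel nabla (imp \top) /\ cancel (imp \top) nabla.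
Proof.
move=> nabla_top nabla_imp.
have nabla_imp_top x : nabla (imp \top x) = imp \top (nabla x).
  by rewrite nabla_imp nabla_top.
have inv x : imp \top (nabla x) = x.
  by apply: le_anti; rewrite le_imp_top_nabla andbT -nabla_imp_top nabla_imp_top_le.
by split=> x; rewrite ?nabla_imp_top inv.
Qed.

Lemma frame_N : alg_sat imp nabla cN -> frame_sat point_le access cN.
Proof.
case=> nabla_top nabla_meet.
exists (preimage_point nabla_top nabla_meet nabla_preserves_joins); split.
- by move=> p q /point_leE pq; apply/point_leE => x /pq.
- by move=> p q; rewrite accessE point_leE.
Qed.

Lemma frame_H : alg_sat imp nabla cH -> frame_sat point_le access cH.
Proof.
case=> nabla_top nabla_meet nabla_imp.
have [nabla_inv imp_top_inv] := imp_top_nabla_inv nabla_top nabla_imp.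
have imp_top_top : imp \top \top = \top by apply: le_anti; rewrite lex1 imp_refl.
have imp_top_joins join bot : is_finite_joins join bot ->
    imp \top bot <= bot /\
    (forall x y, imp \top (join x y) <= join (imp \top x) (imp \top y)).
  move=> joins; apply: (order_iso_preserves_joins joins) => //.
    by move=> x y; apply: imp_mono.
  exact: nabla_mono.
exists (preimage_point nabla_top nabla_meet nabla_preserves_joins); split.
- move=> p q; rewrite !point_leE; split=> [pq x|pq x px]; first exact: pq.
  by rewrite -[x]imp_top_inv; apply: (pq (imp \top x)); rewrite /= imp_top_inv.
- move=> v; exists (preimage_point imp_top_top (imp_meet \top) imp_top_joins v).
  by apply: point_eq => x /=; rewrite nabla_inv.
- by move=> p q; rewrite accessE point_leE.
Qed.

Lemma frame_P : alg_sat imp nabla cP -> frame_sat point_le access cP.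
Proof.
move=> nabla_le_id p q /accessE pq; apply/point_leE => x px.
exact: point_up (pq x px) (nabla_le_id x).
Qed.

Lemma frame_F : alg_sat imp nabla cF -> frame_sat point_le access cF.
Proof.
move=> id_le_nabla p; apply/accessE => x px; exact: point_up px (id_le_nabla x).
Qed.

(* If [p] contains the least element [z], it contains the bottom of any
   admissible joins; so there are none, and the full filter is a point. *)
Lemma frame_wF : alg_sat imp nabla cwF -> frame_sat point_le access cwF.
Proof.
case=> z [z_le nabla_z] p.
case: (classic (p z)) => [pz|npz].
  have full_filter : is_filter (fun _ : A => True) by [].
  have full_prime : join_prime (fun _ : A => True).
    move=> join bot adm; have [pbot _] := point_prime p _ _ adm.
    by case: pbot; apply: point_up pz (z_le bot).
  by exists (Point full_filter full_prime).
have imp_top_z : imp \top z = z.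
  by apply: nabla_z; apply: le_anti; rewrite z_le andbT nabla_imp_top_le.
have npz' : ~ p (imp \top z) by rewrite imp_top_z.
by have [q [pq _ _]] := access_witness npz'; exists q.
Qed.

Lemma frame_sat_of_alg_sat c : alg_sat imp nabla c -> frame_sat point_le access c.
Proof.
by case: c; [exact: frame_N | exact: frame_H | exact: frame_P | exact: frame_F
  | exact: frame_wF].
Qed.

End Temporal.
End CanonicalFrame.

Theorem theorem8p7 (d : Order.disp_t) (A : tMeetSemilatticeType d)
  (imp : A -> A -> A) :
  is_implication imp -> internalizes_meets imp ->
  exists (W : Type) (leW R : W -> W -> Prop) (i : A -> W -> Prop),
    kripke_frame leW R /\
        (* i lands in U(W, leW) *)
        (forall a, is_upset leW (i a)) /\
        (* i preserves finite meets *)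
        ((forall w, i \top w) /\
          (forall a b w, i (a `&` b) w <-> (i a w /\ i b w))) /\
        (* i is an order embedding *)
        (forall a b, a <= b <-> (forall w, i a w -> i b w)) /\
        (* i preserves implication *)
        (forall a b w, i (imp a b) w <-> impK R (i a) (i b) w) /\
        (* finite joins are preserved under the distributivity hypotheses *)
        (forall (join : A -> A -> A) (bot : A),
           is_finite_joins join bot -> distributive join bot ->
           internalizes_joins imp join bot ->
           (forall w, ~ i bot w) /\
           (forall a b w, i (join a b) w <-> (i a w \/ i b w))) /\
        (* temporal algebra case *)
        (forall nabla : A -> A, temporal imp nabla ->
           (forall a w, i (nabla a) w <-> nablaK R (i a) w) /\
           (forall Rs : cond -> Prop,
              (forall c, Rs c -> alg_sat imp nabla c) ->
              forall c, Rs c -> frame_sat leW R c)).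
Proof.
move=> impA imp_meet.
exists (point imp), (@point_le _ _ imp), (@access _ _ imp), (@ival _ _ imp).
split; first exact: canonical_kripke_frame.
split; first by move=> a p q pa [pq _]; apply: pq.
split; first by split=> [p|a b p]; [apply: point_top | apply: point_meetE].
split; first exact: ival_le.
split; first by move=> a b p; apply: ival_imp.
split; first by move=> join bot joins distr imp_join; apply: ival_join.
move=> nabla nablaA; split; first by move=> a p; apply: ival_nabla.
by move=> Rs Rs_alg c /Rs_alg; apply: frame_sat_of_alg_sat.
Qed.
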